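(* Let $\Pi$ be an $n$-dimensional linear space satisfying the exchange axiom and the axiom (P2), let $0<k<n-1$, let $B=\{p_1,\dots,p_{n+1}\}$ be a base of $\Pi$, and let $\mathcal{B}_k$ be the base subset of $\mathcal{G}_k(\Pi)$ associated with $B$. If $\mathcal{R}$ is a maximal inexact subset of $\mathcal{B}_k$, then there exist distinct indices $i,j$ such that $$\mathcal{R}=\mathcal{B}_k(-i)\cup\mathcal{B}_k(p_ip_j).$$
   Context: A linear space $\Pi=(P,\mathcal{L})$ is a set $P$ of points with a family $\mathcal{L}$ of proper subsets (lines) such that each line has at least two points and any two distinct points $p,q$ lie on exactly one line $pq$. A subspace is a set $S\subset P$ with $pq\subset S$ for all distinct $p,q\in S$; $\overline{X}$ is the smallest subspace containing $X$. A set $X$ is independent if $\overline{X}$ is not spanned by a proper subset of $X$; a base of $\Pi$ is an independent set spanning $P$. A subspace is $m$-dimensional if $m+1$ is the smallest number of points spanning it. Exchange axiom: for every $X\subset P$ and $p_1,p_2\in P\setminus\overline{X}$, $p_2\in\overline{X\cup\{p_1\}}$ implies $p_1\in\overline{X\cup\{p_2\}}$. Axiom (P2): every line has at least three points. $\mathcal{G}_k(\Pi)$ is the set of $k$-dimensional subspaces; the base subset of $\mathcal{G}_k(\Pi)$ associated with a base $B$ is the set of all $k$-dimensional subspaces spanned by points of $B$. A subset $\mathcal{R}\subset\mathcal{B}_k$ is exact if $\mathcal{B}_k$ is the unique base subset of $\mathcal{G}_k(\Pi)$ containing $\mathcal{R}$, and inexact otherwise; a maximal inexact subset is one maximal under inclusion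 among inexact subsets of $\mathcal{B}_k$. $\mathcal{B}_k(-i)$ is the set of elements of $\mathcal{B}_k$ not containing $p_i$, and $\mathcal{B}_k(p_ip_j)$ is the set of elements of $\mathcal{B}_k$ containing the line $p_ip_j$. *)

(* Sets are predicates [T -> Prop]; equality of sets is Leibniz
   equality, which coincides with extensional set equality. *)
From Stdlib Require Import List Arith.
Import ListNotations.

Section LinearSpaces.
Context {P : Type}.
Variable L : (P -> Prop) -> Prop.

Definition subset (X Y : P -> Prop) : Prop := forall x, X x -> Y x.
Definition fullset : P -> Prop := fun _ => True.

Definition linear_space : Prop :=
  (forall l, L l -> exists x, ~ l x) /\
  (forall l, L l -> exists a b, a <> b /\ l a /\ l b) /\
  (forall p q, p <> q -> exists l, L l /\ l p /\ l q /\
      forall l', L l' -> l' p -> l' q -> l' = l).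

Definition is_line_through (p q : P) (l : P -> Prop) : Prop := L l /\ l p /\ l q.

Definition subspace (S : P -> Prop) : Prop :=
  forall p q, S p -> S q -> p <> q ->
    forall l, is_line_through p q l -> subset l S.

Definition closure (X : P -> Prop) : P -> Prop :=
  fun x => forall S, subspace S -> subset X S -> S x.

Definition independent (X : P -> Prop) : Prop :=
  ~ exists Y, subset Y X /\ (exists x, X x /\ ~ Y x) /\ closure Y = closure X.

Definition base (B : P -> Prop) : Prop := independent B /\ closure B = fullset.

Definition has_card (X : P -> Prop) (c : nat) : Prop :=
  exists l : list P, NoDup l /\ length l = c /\ forall x, X x <-> In x l.

Definition dimension (S : P -> Prop) (m : nat) : Prop :=
  subspace S /\
  (exists X, has_card X (m + 1) /\ closure X = S) /\
  (forall X c, has_card X c -> closure X = S -> m + 1 <= c).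

Definition exchange_axiom : Prop :=
  forall (X : P -> Prop) p1 p2, ~ closure X p1 -> ~ closure X p2 ->
    closure (fun x => X x \/ x = p1) p2 -> closure (fun x => X x \/ x = p2) p1.

Definition axiom_P2 : Prop :=
  forall l, L l -> exists a b c, a <> b /\ a <> c /\ b <> c /\ l a /\ l b /\ l c.

Definition Grass (k : nat) : (P -> Prop) -> Prop := fun S => dimension S k.

Definition base_subset (B : P -> Prop) (k : nat) : (P -> Prop) -> Prop :=
  fun S => Grass k S /\ exists X, subset X B /\ closure X = S.

Definition subsetG (R R' : (P -> Prop) -> Prop) : Prop := forall S, R S -> R' S.

Definition inexact (B : P -> Prop) (k : nat) (R : (P -> Prop) -> Prop) : Prop :=
  subsetG R (base_subset B k) /\
  exists B', base B' /\ subsetG R (base_subset B' k) /\ base_subset B' k <> base_subset B k.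

Definition exact (B : P -> Prop) (k : nat) (R : (P -> Prop) -> Prop) : Prop :=
  subsetG R (base_subset B k) /\
  forall B', base B' -> subsetG R (base_subset B' k) -> base_subset B' k = base_subset B k.

Definition maximal_inexact (B : P -> Prop) (k : nat) (R : (P -> Prop) -> Prop) : Prop :=
  inexact B k R /\
  forall R', inexact B k R' -> subsetG R R' -> R' = R.

Definition Bk_minus (B : P -> Prop) (k : nat) (p : P) : (P -> Prop) -> Prop :=
  fun S => base_subset B k S /\ ~ S p.

Definition Bk_line (B : P -> Prop) (k : nat) (p q : P) : (P -> Prop) -> Prop :=
  fun S => base_subset B k S /\ exists l, is_line_through p q l /\ subset l S.

End LinearSpaces.

(* If every base point p_i were separated from every other p_j by a member of R (one containing
   p_i but not p_j), the members of R through p_i would meet in {p_i}.  By the exchange axiom,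
   spans of subsets of an independent set meet like the subsets themselves, so any base B' with
   R in B'_k would contain every p_i, hence equal B: R would be exact.  So some p_i is never
   separated from some p_j, i.e. R is contained in B_k(-i) ∪ B_k(p_i p_j).  This union is still
   inexact: exchanging p_i for a third point q of the line p_i p_j yields a base B' with the
   union inside B'_k, while a k-subspace of B_k through p_i avoiding p_j (which exists because
   k < n - 1) is not in B'_k.  Maximality of R gives equality. *)

From Stdlib Require Import Arith Bool List Lia Classical.
From Stdlib Require Import FunctionalExtensionality PropExtensionality.
Import ListNotations.

Lemma set_ext {P : Type} (X Y : P -> Prop) : (forall x, X x <-> Y x) -> X = Y.
Proof.
  intros H; apply functional_extensionality; intros x; apply propositional_extensionality, H.
Qed.

Definition setI {P : Type} (X Y : P -> Prop) : P -> Prop := fun y => X y /\ Y y.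
Definition setD1 {P : Type} (X : P -> Prop) (a : P) : P -> Prop := fun y => X y /\ y <> a.
Definition setU1 {P : Type} (X : P -> Prop) (a : P) : P -> Prop := fun y => X y \/ y = a.

Lemma In_firstn {A : Type} (k : nat) (l : list A) x : In x (firstn k l) -> In x l.
Proof. intros Hx; rewrite <- (firstn_skipn k l); apply in_or_app; left; exact Hx. Qed.

Lemma NoDup_firstn {A : Type} (k : nat) (l : list A) : NoDup l -> NoDup (firstn k l).
Proof. intros Hl; rewrite <- (firstn_skipn k l) in Hl; exact (NoDup_app_remove_r _ _ Hl). Qed.

Lemma exists_index_list N k i j :
  i < N -> j < N -> i <> j -> k + 2 <= N ->
  exists idx, NoDup idx /\ length idx = k + 1 /\ In i idx /\ ~ In j idx /\
    forall m, In m idx -> m < N.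
Proof.
  intros Hi Hj Hij HkN.
  set (f := fun m => negb (m =? i) && negb (m =? j)).
  set (rest := filter f (seq 0 N)).
  assert (Hrest : forall m, In m rest -> m < N /\ m <> i /\ m <> j).
  { intros m Hm; apply filter_In in Hm as [Hm Hf]; apply in_seq in Hm.
    unfold f in Hf; apply andb_prop in Hf as [Hfi Hfj].
    apply negb_true_iff, Nat.eqb_neq in Hfi, Hfj; repeat split; lia. }
  assert (Hlen : k <= length rest).
  { pose proof (filter_length f (seq 0 N)) as Hsplit; rewrite length_seq in Hsplit.
    enough (length (filter (fun m => negb (f m)) (seq 0 N)) <= 2) by (unfold rest; lia).
    apply (NoDup_incl_length (l' := [i; j])); [apply NoDup_filter, seq_NoDup|].
    intros m Hm; apply filter_In in Hm as [_ Hm]; revert Hm; unfold f.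
    destruct (Nat.eqb_spec m i) as [->|_]; [intros _; left; reflexivity|].
    destruct (Nat.eqb_spec m j) as [->|_]; [intros _; right; left; reflexivity|].
    discriminate. }
  exists (i :: firstn k rest); repeat split.
  - constructor; [intros Hin; exact (proj1 (proj2 (Hrest i (In_firstn _ _ _ Hin))) eq_refl)|].
    apply NoDup_firstn, NoDup_filter, seq_NoDup.
  - simpl; rewrite firstn_length_le; [lia | exact Hlen].
  - left; reflexivity.
  - intros [E|Hin]; [exact (Hij E) | exact (proj2 (proj2 (Hrest j (In_firstn _ _ _ Hin))) eq_refl)].
  - intros m [<-|Hm]; [exact Hi | exact (proj1 (Hrest m (In_firstn _ _ _ Hm)))].
Qed.

Section LinearSpace.
Context {P : Type}.
Variable L : (P -> Prop) -> Prop.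

Lemma subset_closure X : subset X (closure L X).
Proof. intros x Hx S _ HXS; exact (HXS x Hx). Qed.

Lemma closure_subspace X : subspace L (closure L X).
Proof.
  intros a b Ha Hb Hab l Hl x Hx S HS HXS.
  exact (HS a b (Ha S HS HXS) (Hb S HS HXS) Hab l Hl x Hx).
Qed.

Lemma closure_min X S : subspace L S -> subset X S -> subset (closure L X) S.
Proof. intros HS HXS x Hx; exact (Hx S HS HXS). Qed.

Lemma closure_sub_closure X Y : subset X (closure L Y) -> subset (closure L X) (closure L Y).
Proof. apply closure_min, closure_subspace. Qed.

Lemma closure_mono X Y : subset X Y -> subset (closure L X) (closure L Y).
Proof. intros HXY; apply closure_sub_closure; intros x Hx; apply subset_closure, HXY, Hx. Qed.

Lemma subspace_line S a b l :
  subspace L S -> S a -> S b -> a <> b -> L l -> l a -> l b -> subset l S.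
Proof. intros HS Ha Hb Hab Hl la lb; exact (HS a b Ha Hb Hab l (conj Hl (conj la lb))). Qed.

Lemma closure_sub_singleton X c : (forall y, X y -> y = c) -> subset (closure L X) X.
Proof.
  intros Hc; apply closure_min; [|intros x Hx; exact Hx].
  intros a b Ha Hb Hab; exfalso; apply Hab; rewrite (Hc a Ha), (Hc b Hb); reflexivity.
Qed.

Lemma closure_finitary X x :
  closure L X x -> exists F, subset (fun y => In y F) X /\ closure L (fun y => In y F) x.
Proof.
  apply (closure_min X
           (fun x => exists F, subset (fun y => In y F) X /\ closure L (fun y => In y F) x)).
  - intros a b (Fa & HFa & Ha) (Fb & HFb & Hb) Hab l (Hl & la & lb) y ly.
    exists (Fa ++ Fb); split.
    + intros z Hz; apply in_app_or in Hz as [Hz|Hz]; [exact (HFa z Hz) | exact (HFb z Hz)].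
    + apply (subspace_line _ a b l (closure_subspace _)); try assumption;
        [revert Ha | revert Hb]; apply closure_mono; intros z Hz; apply in_or_app; auto.
  - intros y Hy; exists [y]; split.
    + intros z [<-|[]]; exact Hy.
    + apply subset_closure; left; reflexivity.
Qed.

Definition free (X : P -> Prop) : Prop := forall x, X x -> ~ closure L (setD1 X x) x.

Lemma independent_free X : independent L X <-> free X.
Proof.
  split.
  - intros HI x Hx Hc; apply HI.
    exists (setD1 X x); split; [intros y [Hy _]; exact Hy | split].
    + exists x; split; [exact Hx | intros [_ Hne]; exact (Hne eq_refl)].
    + apply set_ext; intros y; split.
      * apply closure_mono; intros z [Hz _]; exact Hz.
      * apply closure_sub_closure; intros z Hz.
        destruct (classic (z = x)) as [->|Hne]; [exact Hc|].
        apply subset_closure; split; assumption.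
  - intros HF (Y & HYX & (x & Hx & HYx) & HYc).
    apply (HF x Hx).
    assert (HxY : closure L Y x) by (rewrite HYc; apply subset_closure, Hx).
    revert HxY; apply closure_mono.
    intros y Hy; split; [exact (HYX y Hy) | intros ->; exact (HYx Hy)].
Qed.

Lemma free_sub X Y : free X -> subset Y X -> free Y.
Proof.
  intros HX HYX y Hy Hc; apply (HX y (HYX y Hy)); revert Hc.
  apply closure_mono; intros z [Hz Hne]; split; [exact (HYX z Hz) | exact Hne].
Qed.

Lemma free_closure_mem I X b : free I -> subset X I -> I b -> closure L X b -> X b.
Proof.
  intros HI HXI Hb Hc; apply NNPP; intros HXb; apply (HI b Hb); revert Hc.
  apply closure_mono; intros y Hy; split; [exact (HXI y Hy) | intros ->; exact (HXb Hy)].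
Qed.

Lemma base_free B : base L B -> free B.
Proof. intros HB; apply independent_free, HB. Qed.

Lemma base_spans B x : base L B -> closure L B x.
Proof. intros HB; rewrite (proj2 HB); exact I. Qed.

Lemma base_sub_eq B B' : base L B -> base L B' -> subset B B' -> B' = B.
Proof.
  intros HB HB' HBB'; apply set_ext; intros x; split; [|apply HBB'].
  intros Hx; apply NNPP; intros HBx; apply (base_free B' HB' x Hx).
  apply (closure_mono B); [|apply base_spans, HB].
  intros y Hy; split; [exact (HBB' y Hy) | intros ->; exact (HBx Hy)].
Qed.

Definition spanned_by (I S : P -> Prop) : Prop := exists X, subset X I /\ closure L X = S.

Lemma spanned_closure_setI I S x : spanned_by I S -> S x -> closure L (setI I S) x.
Proof.
  intros (X & HXI & <-); apply closure_mono.
  intros y Hy; split; [exact (HXI y Hy) | apply subset_closure, Hy].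
Qed.

Lemma line_third_point l a b : axiom_P2 L -> L l -> exists q, l q /\ q <> a /\ q <> b.
Proof.
  intros HP2 Hl; apply NNPP; intros Hno.
  assert (Hab : forall w, l w -> w = a \/ w = b).
  { intros w lw; apply NNPP; intros Hw; apply Hno; exists w; tauto. }
  destruct (HP2 l Hl) as (x & y & z & Hxy & Hxz & Hyz & lx & ly & lz).
  destruct (Hab x lx), (Hab y ly), (Hab z lz); congruence.
Qed.

Lemma subsetG_Bk_minus_line B k R a b :
  linear_space L -> a <> b -> subsetG R (base_subset L B k) ->
  (forall S, R S -> S a -> S b) ->
  subsetG R (fun S => Bk_minus L B k a S \/ Bk_line L B k a b S).
Proof.
  intros (_ & _ & Hline) Hab HRB HRab S HS.
  destruct (classic (S a)) as [Sa|Sa]; [right | left; split; [exact (HRB S HS) | exact Sa]].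
  split; [exact (HRB S HS)|].
  destruct (Hline a b Hab) as (l & Hl & la & lb & _).
  exists l; split; [repeat split; assumption|].
  assert (Sb := HRab S HS Sa).
  destruct (HRB S HS) as [_ (X & _ & <-)].
  exact (subspace_line _ a b l (closure_subspace X) Sa Sb Hab Hl la lb).
Qed.

Section Exchange.
Hypothesis Hex : exchange_axiom L.

Lemma closure_meet_step I X Y a e :
  free I -> subset X I -> subset Y I -> X a -> ~ Y a ->
  closure L X e -> closure L Y e -> closure L (setD1 X a) e.
Proof.
  intros HI HXI HYI Ha HYa HXe HYe; apply NNPP; intros He.
  assert (HaX : ~ closure L (setD1 X a) a).
  { intros Hc; apply (HI a (HXI a Ha)); revert Hc.
    apply closure_mono; intros y [Hy Hne]; split; [exact (HXI y Hy) | exact Hne]. }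
  assert (Hae : closure L (setU1 (setD1 X a) e) a).
  { apply (Hex _ a e HaX He); revert HXe; apply closure_mono; intros y Hy.
    destruct (classic (y = a)) as [->|Hya]; [right; reflexivity | left; split; assumption]. }
  apply (HI a (HXI a Ha)); revert Hae; apply closure_sub_closure.
  intros y [[Hy Hya]| ->]; [apply subset_closure; split; [exact (HXI y Hy) | exact Hya]|].
  revert HYe; apply closure_mono.
  intros y Hy; split; [exact (HYI y Hy) | intros ->; exact (HYa Hy)].
Qed.

Lemma closure_meet_list I Y e (F : list P) :
  free I -> subset Y I -> closure L Y e ->
  forall X, subset X I -> (forall x, X x -> Y x \/ In x F) -> closure L X e ->
  closure L (setI X Y) e.
Proof.
  intros HI HYI HYe; induction F as [|a F IH]; intros X HXI HXF HXe.
  - revert HXe; apply closure_mono; intros x Hx; split; [exact Hx|].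
    destruct (HXF x Hx) as [Hy|[]]; exact Hy.
  - destruct (classic (X a /\ ~ Y a)) as [[Ha HYa]|Ha].
    + apply (closure_mono (setI (setD1 X a) Y)); [intros x [[Hx _] Hy]; split; assumption|].
      apply IH; [intros x [Hx _]; exact (HXI x Hx) | |
                 exact (closure_meet_step I X Y a e HI HXI HYI Ha HYa HXe HYe)].
      intros x [Hx Hxa]; destruct (HXF x Hx) as [Hy|[<-|HF]];
        [left; exact Hy | contradiction | right; exact HF].
    + apply IH; [exact HXI | | exact HXe].
      intros x Hx; destruct (HXF x Hx) as [Hy|[<-|HF]]; [left; exact Hy | | right; exact HF].
      left; apply NNPP; intros HYx; apply Ha; split; assumption.
Qed.

Lemma closure_meet I X Y e :
  free I -> subset X I -> subset Y I -> closure L X e -> closure L Y e ->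
  closure L (setI X Y) e.
Proof.
  intros HI HXI HYI HXe HYe.
  destruct (closure_finitary X e HXe) as (F & HFX & HFe).
  apply (closure_mono (setI (fun y => In y F) Y)).
  - intros y [Hy HYy]; split; [exact (HFX y Hy) | exact HYy].
  - apply (closure_meet_list I Y e F HI HYI HYe);
      [intros y Hy; exact (HXI y (HFX y Hy)) | | exact HFe].
    intros x Hx; right; exact Hx.
Qed.

Lemma closure_bigmeet {J : Type} I (T : J -> P -> Prop) e (js : list J) :
  free I -> closure L I e -> (forall j, In j js -> closure L (setI I (T j)) e) ->
  closure L (fun y => I y /\ forall j, In j js -> T j y) e.
Proof.
  intros HI HIe; induction js as [|j js IH]; intros HT.
  - revert HIe; apply closure_mono; intros y Hy; split; [exact Hy | intros j []].
  - assert (Hmeet := closure_meet I _ _ e HI (fun y Hy => proj1 Hy) (fun y Hy => proj1 Hy)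
                       (HT j (or_introl eq_refl)) (IH (fun j' Hj' => HT j' (or_intror Hj')))).
    revert Hmeet; apply closure_mono; intros y [[Hy Hj] [_ Hjs]]; split; [exact Hy|].
    intros j' [<-|Hj']; [exact Hj | exact (Hjs j' Hj')].
Qed.

Lemma free_length_le (Z : list P) : forall (Y : list P) (A : P -> Prop),
  NoDup Y -> (forall x, In x Y -> ~ A x) -> free (fun x => In x Y \/ A x) ->
  (forall x, In x Y -> closure L (fun y => A y \/ In y Z) x) -> length Y <= length Z.
Proof.
  induction Z as [|z Z IH]; intros Y A HND HYA HF HYZ.
  - destruct Y as [|x Y]; [reflexivity | exfalso].
    apply (HF x (or_introl (or_introl eq_refl))).
    apply (closure_mono (fun y => A y \/ In y [])); [|exact (HYZ x (or_introl eq_refl))].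
    intros y [Hy|[]]; split; [right; exact Hy | intros ->; exact (HYA x (or_introl eq_refl) Hy)].
  - destruct (classic (forall x, In x Y -> closure L (fun y => A y \/ In y Z) x)) as [HYZ'|HYZ'].
    + simpl; specialize (IH Y A HND HYA HF HYZ'); lia.
    + apply not_all_ex_not in HYZ' as [a Ha]; apply imply_to_and in Ha as [HaY HaZ].
      destruct (in_split a Y HaY) as (Y1 & Y2 & ->).
      (* [a] escapes the span of [A ∪ Z], so by exchange it can take the place of [z]. *)
      assert (Hz : closure L (fun y => (A y \/ In y Z) \/ y = a) z).
      { apply Hex; [| exact HaZ |].
        - intros Hz; apply HaZ.
          apply (closure_sub_closure (fun y => A y \/ In y (z :: Z)));
            [|exact (HYZ a (in_elt a Y1 Y2))].
          intros y [Hy|[<-|Hy]]; [apply subset_closure; left; exact Hy | exact Hz |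
                                  apply subset_closure; right; exact Hy].
        - apply (closure_mono (fun y => A y \/ In y (z :: Z))); [|exact (HYZ a (in_elt a Y1 Y2))].
          intros y [Hy|[<-|Hy]]; [left; left | right | left; right]; easy. }
      enough (length (Y1 ++ Y2) <= length Z) by (rewrite length_app in *; simpl; lia).
      apply (IH (Y1 ++ Y2) (fun y => A y \/ y = a)).
      * exact (NoDup_remove_1 Y1 Y2 a HND).
      * intros x Hx [HAx| ->]; [| exact (NoDup_remove_2 Y1 Y2 a HND Hx)].
        apply (HYA x); [apply in_app_iff in Hx; apply in_app_iff; simpl; tauto | exact HAx].
      * apply (free_sub _ _ HF); intros y [Hy|[HAy| ->]]; [| right; exact HAy | left; apply in_elt].
        left; apply in_app_iff in Hy; apply in_app_iff; simpl; tauto.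
      * intros x Hx; apply (closure_sub_closure (fun y => A y \/ In y (z :: Z))).
        -- intros y [HAy|[<-|HyZ]]; [apply subset_closure; left; left; exact HAy | |
                                     apply subset_closure; right; exact HyZ].
           revert Hz; apply closure_mono.
           intros w [[Hw|Hw]|Hw]; [left; left | right | left; right]; assumption.
        -- apply HYZ; apply in_app_iff in Hx; apply in_app_iff; simpl; tauto.
Qed.

Lemma dimension_closure_free X m : has_card X (m + 1) -> free X -> dimension L (closure L X) m.
Proof.
  intros HX HF; split; [apply closure_subspace|].
  split; [exists X; split; [exact HX | reflexivity]|].
  intros Z c (lZ & _ & HlZ & HZ) HZX.
  destruct HX as (lX & HND & HlX & HXl).
  rewrite <- HlZ, <- HlX.
  apply (free_length_le lZ lX (fun _ => False) HND); [intros x _ [] | |].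
  - apply (free_sub _ _ HF); intros y [Hy|[]]; apply HXl, Hy.
  - intros x Hx; assert (Hc : closure L Z x) by (rewrite HZX; apply subset_closure, HXl, Hx).
    revert Hc; apply closure_mono; intros y Hy; right; apply HZ, Hy.
Qed.

Lemma base_exchange B a q :
  base L B -> B a -> ~ closure L (setD1 B a) q -> base L (setU1 (setD1 B a) q).
Proof.
  intros HB Ha Hq.
  assert (HaB : ~ closure L (setD1 B a) a) by exact (base_free B HB a Ha).
  split.
  - apply independent_free; intros x Hx Hc.
    destruct (classic (x = q)) as [->|Hxq].
    + apply Hq; revert Hc; apply closure_mono; intros y [[Hy| ->] Hne]; [exact Hy | contradiction].
    + destruct Hx as [[HxB Hxa]|Hxq']; [|contradiction].
      set (W := setD1 (setD1 B a) x).
      assert (HWx : ~ closure L W x).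
      { intros Hc'; apply (base_free B HB x HxB); revert Hc'; apply closure_mono.
        intros y [[Hy _] Hyx]; split; assumption. }
      assert (HWq : ~ closure L W q).
      { intros Hc'; apply Hq; revert Hc'; apply closure_mono; intros y [Hy _]; exact Hy. }
      apply Hq; apply (closure_mono (setU1 W x)); [|apply (Hex W q x HWq HWx)].
      * intros y [[Hy _]| ->]; [exact Hy | split; assumption].
      * revert Hc; apply closure_mono; intros y [[Hy| ->] Hyx]; [left; split | right]; auto.
  - apply set_ext; intros x; split; [intros _; exact I | intros _].
    apply (closure_sub_closure B); [|apply base_spans, HB].
    intros y Hy; destruct (classic (y = a)) as [->|Hya].
    + apply (Hex _ a q HaB Hq); apply (closure_mono B); [|apply base_spans, HB].
      intros z Hz; destruct (classic (z = a)) as [->|Hza]; [right | left; split]; easy.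
    + apply subset_closure; left; split; assumption.
Qed.

Section SeparatingFamily.
Variables (B : P -> Prop) (lB : list P) (Rf : (P -> Prop) -> Prop).
Hypothesis HBl : forall x, B x <-> In x lB.
Hypothesis HB : base L B.
Hypothesis HRB : forall S, Rf S -> spanned_by B S.
Hypothesis Hsep : forall a b, B a -> B b -> a <> b -> exists S, Rf S /\ S a /\ ~ S b.

(* A union over all witnesses, so that no member of [Rf] has to be chosen for each [b]. *)
Let separates a b y := b = a \/ exists S, Rf S /\ S a /\ ~ S b /\ S y.

Lemma closure_separates I a e :
  free I -> closure L I e -> (forall S, Rf S -> spanned_by I S) ->
  (forall b, In b lB -> separates a b e) ->
  closure L (fun y => I y /\ forall b, In b lB -> separates a b y) e.
Proof.
  intros HI HIe HRI He; apply closure_bigmeet; [exact HI | exact HIe |].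
  intros b Hb; destruct (He b Hb) as [->|(S & HS & Sa & Sb & Se)].
  - revert HIe; apply closure_mono; intros y Hy; split; [exact Hy | left; reflexivity].
  - apply (closure_mono (setI I S)); [|exact (spanned_closure_setI I S e (HRI S HS) Se)].
    intros y [Hy Sy]; split; [exact Hy | right; exists S; auto].
Qed.

Lemma separates_eq a x : B a -> (forall b, In b lB -> separates a b x) -> x = a.
Proof.
  intros Ha Hx.
  assert (Hsing : forall y, (B y /\ forall b, In b lB -> separates a b y) -> y = a).
  { intros y [Hy Hsy].
    destruct (Hsy y (proj1 (HBl y) Hy)) as [->|(S & _ & _ & Sy & Sy')]; easy. }
  apply Hsing, (closure_sub_singleton _ a Hsing), closure_separates;
    [apply base_free, HB | apply base_spans, HB | exact HRB | exact Hx].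
Qed.

Lemma separating_base_sub B' : base L B' -> (forall S, Rf S -> spanned_by B' S) -> subset B B'.
Proof.
  intros HB' HRB' a Ha.
  assert (Haa : forall b, In b lB -> separates a b a).
  { intros b Hb; destruct (classic (b = a)) as [->|Hba]; [left; reflexivity|].
    destruct (Hsep a b Ha (proj2 (HBl b) Hb) (fun E => Hba (eq_sym E))) as (S & HS & Sa & Sb).
    right; exists S; auto. }
  assert (Hsing : forall y, (B' y /\ forall b, In b lB -> separates a b y) -> y = a)
    by (intros y [_ Hy]; exact (separates_eq a y Ha Hy)).
  apply (closure_sub_singleton _ a Hsing), closure_separates;
    [apply base_free, HB' | apply base_spans, HB' | exact HRB' | exact Haa].
Qed.

End SeparatingFamily.

Lemma inexact_unseparated B lB k R :
  (forall x, B x <-> In x lB) -> base L B -> inexact L B k R ->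
  exists a b, B a /\ B b /\ a <> b /\ forall S, R S -> S a -> S b.
Proof.
  intros HBl HB (HRB & B' & HB' & HRB' & Hne); apply NNPP; intros Hno; apply Hne.
  rewrite (base_sub_eq B B' HB HB'); [reflexivity|].
  apply (separating_base_sub B lB R HBl HB); [intros S HS; exact (proj2 (HRB S HS)) | |
    exact HB' | intros S HS; exact (proj2 (HRB' S HS))].
  intros a b Ha Hb Hab; apply NNPP; intros Hnsep; apply Hno.
  exists a, b; repeat split; try assumption.
  intros S HS Sa; apply NNPP; intros Sb; apply Hnsep; exists S; auto.
Qed.

Section LineExchange.
Variables (B : P -> Prop) (a b q : P) (l : P -> Prop).
Hypotheses (HB : base L B) (Ha : B a) (Hb : B b) (Hab : a <> b).
Hypotheses (Hl : L l) (la : l a) (lb : l b) (lq : l q) (Hqa : q <> a) (Hqb : q <> b).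

Lemma line_point_not_closure : ~ closure L (setD1 B a) q.
Proof.
  intros Hq; apply (base_free B HB a Ha).
  apply (subspace_line _ q b l (closure_subspace _)); try assumption.
  apply subset_closure; split; [exact Hb | congruence].
Qed.

Lemma spanned_avoiding_exchange S : spanned_by B S -> ~ S a -> spanned_by (setU1 (setD1 B a) q) S.
Proof.
  intros (X & HXB & HXS) Sa; exists X; split; [|exact HXS].
  intros y Hy; left; split; [exact (HXB y Hy)|].
  intros ->; apply Sa; rewrite <- HXS; apply subset_closure, Hy.
Qed.

Lemma spanned_through_exchange S :
  spanned_by B S -> S a -> S b -> spanned_by (setU1 (setD1 B a) q) S.
Proof.
  intros (X & HXB & <-) Sa Sb.
  assert (Sq : closure L X q)
    by exact (subspace_line _ a b l (closure_subspace X) Sa Sb Hab Hl la lb q lq).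
  assert (Xb : X b) by exact (free_closure_mem B X b (base_free B HB) HXB Hb Sb).
  exists (setU1 (setD1 X a) q); split.
  - intros y [[Hy Hya]| ->]; [left; split; [exact (HXB y Hy) | exact Hya] | right; reflexivity].
  - apply set_ext; intros x; split.
    + apply closure_sub_closure; intros y [[Hy _]| ->]; [apply subset_closure, Hy | exact Sq].
    + apply closure_sub_closure; intros y Hy.
      destruct (classic (y = a)) as [->|Hya]; [|apply subset_closure; left; split; assumption].
      apply (subspace_line _ q b l (closure_subspace _)); try assumption.
      * apply subset_closure; right; reflexivity.
      * apply subset_closure; left; split; [exact Xb | congruence].
Qed.

Lemma exchange_spanned_line S : spanned_by (setU1 (setD1 B a) q) S -> S a -> S b.
Proof.
  intros (Y & HYB' & <-) Sa; apply NNPP; intros Sb.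
  assert (Yq : ~ closure L Y q).
  { intros Sq; apply Sb.
    exact (subspace_line _ a q l (closure_subspace Y) Sa Sq (not_eq_sym Hqa) Hl la lq b lb). }
  apply (base_free B HB a Ha); revert Sa; apply closure_mono; intros y Hy.
  destruct (HYB' y Hy) as [HyB| ->]; [exact HyB | exfalso; apply Yq, subset_closure, Hy].
Qed.

Lemma line_exchange_inexact k :
  (exists S0, base_subset L B k S0 /\ S0 a /\ ~ S0 b) ->
  inexact L B k (fun S => Bk_minus L B k a S \/ Bk_line L B k a b S).
Proof.
  intros (S0 & HS0 & S0a & S0b).
  split; [intros S [[HS _]|[HS _]]; exact HS|].
  exists (setU1 (setD1 B a) q); split; [exact (base_exchange B a q HB Ha line_point_not_closure)|].
  split.
  - intros S [[[HG HS] Sa]|[[HG HS] (l' & (_ & l'a & l'b) & Hl'S)]]; split; try exact HG.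
    + exact (spanned_avoiding_exchange S HS Sa).
    + exact (spanned_through_exchange S HS (Hl'S a l'a) (Hl'S b l'b)).
  - intros Heq; apply S0b; rewrite <- Heq in HS0; exact (exchange_spanned_line S0 (proj2 HS0) S0a).
Qed.

End LineExchange.

Lemma Bk_minus_line_inexact B k a b :
  linear_space L -> axiom_P2 L -> base L B -> B a -> B b -> a <> b ->
  (exists S0, base_subset L B k S0 /\ S0 a /\ ~ S0 b) ->
  inexact L B k (fun S => Bk_minus L B k a S \/ Bk_line L B k a b S).
Proof.
  intros (_ & _ & Hline) HP2 HB Ha Hb Hab.
  destruct (Hline a b Hab) as (l & Hl & la & lb & _).
  destruct (line_third_point l a b HP2 Hl) as (q & lq & Hqa & Hqb).
  apply line_exchange_inexact with (q := q) (l := l); assumption.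
Qed.

Lemma exists_Bk_separating (N k : nat) (p : nat -> P) i j :
  (forall i j, i < N -> j < N -> p i = p j -> i = j) ->
  base L (fun x => exists m, m < N /\ x = p m) ->
  i < N -> j < N -> i <> j -> k + 2 <= N ->
  exists S0, base_subset L (fun x => exists m, m < N /\ x = p m) k S0 /\ S0 (p i) /\ ~ S0 (p j).
Proof.
  intros Hinj HB Hi Hj Hij HkN.
  destruct (exists_index_list N k i j Hi Hj Hij HkN) as (idx & Hnd & Hlen & Hiidx & Hjidx & Hidx).
  set (X := fun x => In x (map p idx)).
  assert (HXB : subset X (fun x => exists m, m < N /\ x = p m)).
  { intros x Hx; apply in_map_iff in Hx as (m & <- & Hm).
    exists m; split; [exact (Hidx m Hm) | reflexivity]. }
  exists (closure L X); split; [split; [apply dimension_closure_free|] | split].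
  - exists (map p idx); split; [|split; [rewrite length_map; exact Hlen | reflexivity]].
    apply NoDup_map_NoDup_ForallPairs; [|exact Hnd].
    intros m m' Hm Hm'; apply Hinj; [apply Hidx, Hm | apply Hidx, Hm'].
  - exact (free_sub _ _ (base_free _ HB) HXB).
  - exists X; split; [exact HXB | reflexivity].
  - apply subset_closure, in_map, Hiidx.
  - intros Hc; apply (free_closure_mem _ X _ (base_free _ HB) HXB) in Hc; [|exists j; auto].
    apply in_map_iff in Hc as (m & Hpm & Hm).
    apply Hjidx; rewrite <- (Hinj m j (Hidx m Hm) Hj Hpm); exact Hm.
Qed.

End Exchange.
End LinearSpace.

Theorem lemma2p3 (P : Type) (L : (P -> Prop) -> Prop) (n k : nat) (p : nat -> P)
  (R : (P -> Prop) -> Prop) :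
  linear_space L ->
  exchange_axiom L ->
  axiom_P2 L ->
  dimension L fullset n ->
  0 < k -> k < n - 1 ->
  (forall i j, i < n + 1 -> j < n + 1 -> p i = p j -> i = j) ->
  let B := fun x => exists i, i < n + 1 /\ x = p i in
  base L B ->
  maximal_inexact L B k R ->
  exists i j, i < n + 1 /\ j < n + 1 /\ i <> j /\
    R = (fun S => Bk_minus L B k (p i) S \/ Bk_line L B k (p i) (p j) S).
Proof.
  intros HLS Hex HP2 _ _ Hkn Hinj B HB [HR HRmax].
  assert (HBl : forall x, B x <-> In x (map p (seq 0 (n + 1)))).
  { intros x; unfold B; rewrite in_map_iff; split.
    - intros (m & Hm & ->); exists m; split; [reflexivity | apply in_seq; lia].
    - intros (m & <- & Hm); apply in_seq in Hm; exists m; split; [lia | reflexivity]. }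
  destruct (inexact_unseparated L Hex B _ k R HBl HB HR)
    as (a & b & (i & Hi & ->) & (j & Hj & ->) & Hab & HRab).
  assert (Hij : i <> j) by (intros ->; exact (Hab eq_refl)).
  exists i, j; repeat split; try assumption.
  symmetry; apply HRmax.
  - apply (Bk_minus_line_inexact L Hex); try assumption; [exists i; auto | exists j; auto |].
    apply (exists_Bk_separating L Hex); (assumption || lia).
  - exact (subsetG_Bk_minus_line L B k R (p i) (p j) HLS Hab (proj1 HR) HRab).
Qed.
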